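(* Let $P\subset\mathbb{R}^D$ be an $(\epsilon_1,\epsilon_2)$-significant instance of $k$-center clustering with $z$ outliers, $|P|=n$, and let $\eta\in(0,1)$. Consider the following algorithm: (1) sample a set $S$ of $\frac{k}{\epsilon_1}\log\frac{k}{\eta}$ points uniformly at random from $P$; (2) let $k'=\frac{1}{\eta}\frac{\epsilon_2}{k}|S|$ and run Gonzalez's algorithm for $(k+k')$-center clustering on $S$; output the set $H$ of $k+k'$ centers it returns. Then $|H|=k+\frac{1}{\eta}\frac{\epsilon_2}{\epsilon_1}\log\frac{k}{\eta}$, and with probability at least $(1-\eta)^2$, $\Delta^{-z}_{\infty}(P,H)\le 4r_{opt}$.
   Context: For a finite $H\subset\mathbb{R}^D$ and a point $p$, $dist(p,H)=\min_{q\in H}\|p-q\|$. For an integer $0<z<n$, $\Delta^{-z}_{\infty}(P,H)=\min\{\max_{p\in P'}dist(p,H): P'\subset P, |P'|=n-z\}$. The $k$-center clustering with $z$ outliers problem asks for $k$ centers $C\subset\mathbb{R}^D$ minimizing $\Delta^{-z}_{\infty}(P,C)$; $r_{opt}$ denotes this optimal value. $P_{opt}\subset P$ with $|P_{opt}|=n-z$ denotes the set of inliers of an optimal solution, and $C^*_1,\dots,C^*_k$ are the optimal clusters forming $P_{opt}$ (each point of $P_{opt}$ assigned to its nearest optimal center). The instance is $(\epsilon_1,\epsilon_2)$-significant ($\epsilon_1,\epsilon_2>0$) if $\min_{1\le j\le k}|C^*_j|\ge\frac{\epsilon_1}{k}n$ and $z=\frac{\epsilon_2}{k}n$. Sampling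 uniformly at random means each sample point is drawn independently and uniformly from $P$. Gonzalez's algorithm for $m$-center clustering on $S$: pick an arbitrary point of $S$ as the first center, then repeatedly add as a new center the point of $S$ farthest from the current centers, until $m$ centers are chosen; it is a 2-approximation, i.e., all of $S$ is covered by balls of radius at most twice the optimal $m$-center radius of $S$ around the returned centers. *)

From mathcomp Require Import all_boot all_order all_algebra.
From mathcomp Require Import reals exp.
Set Implicit Arguments. Unset Strict Implicit. Unset Printing Implicit Defensive.
Import Order.TTheory GRing.Theory Num.Theory.
Local Open Scope ring_scope.

Section KCenterDefs.
Variable R : realType.
Variable D : nat.

Definition enorm (v : 'rV[R]_D) : R := Num.sqrt (\sum_(i < D) v ord0 i ^+ 2).
Definition edist (p q : 'rV[R]_D) : R := enorm (p - q).

(* dist(p,H) = min_{q in H} ||p - q||, for a finite nonempty H (given as a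
   sequence; the identity element (head of H) is itself an element of H, so
   this is exactly the minimum when H is nonempty). *)
Definition dist_set (p : 'rV[R]_D) (H : seq 'rV[R]_D) : R :=
  \big[Num.min/edist p (head p H)]_(q <- H) edist p q.

Variable n : nat.

(* max_{p in A} dist(p,H), for A a set of indices of points of P
   (distances are >= 0, so 0 is a neutral element). *)
Definition max_dist (P : 'I_n -> 'rV[R]_D) (H : seq 'rV[R]_D) (A : {set 'I_n}) : R :=
  \big[Num.max/0]_(i in A) dist_set (P i) H.

(* The neutral element max_dist P H setT is an upper bound of every candidate
   (max over a superset), so this is exactly the minimum over the (nonempty,
   as z <= n) family of subsets of size n - z. *)
Definition cost_out (P : 'I_n -> 'rV[R]_D) (z : nat) (H : seq 'rV[R]_D) : R :=
  \big[Num.min/max_dist P H setT]_(A : {set 'I_n} | #|A| == (n - z)%N) max_dist P H A.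

Definition kcenter_opt (k : nat) (P : 'I_n -> 'rV[R]_D) (z : nat)
    (C : 'I_k -> 'rV[R]_D) : Prop :=
  injective C /\
  forall C' : 'I_k -> 'rV[R]_D, injective C' ->
    cost_out P z (codom C) <= cost_out P z (codom C').

Definition significant (k : nat) (P : 'I_n -> 'rV[R]_D) (z : nat) (e1 e2 : R)
    (C : 'I_k -> 'rV[R]_D) : Prop :=
  kcenter_opt P z C /\
  z%:R = e2 / k%:R * n%:R /\
  exists Popt : {set 'I_n},
    #|Popt| = (n - z)%N /\
    max_dist P (codom C) Popt = cost_out P z (codom C) /\
    exists sigma : 'I_n -> 'I_k,
      (forall i, i \in Popt -> edist (P i) (C (sigma i)) = dist_set (P i) (codom C)) /\
      (forall j : 'I_k, e1 / k%:R * n%:R <= #|[set i in Popt | sigma i == j]|%:R).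

Definition gonzalez_run (S : seq 'rV[R]_D) (M : nat) (H : seq 'rV[R]_D) : Prop :=
  size H = M /\
  (forall i, (i < M)%N -> nth 0 H i \in S) /\
  (forall i, (0 < i < M)%N -> forall s, s \in S ->
     dist_set s (take i H) <= dist_set (nth 0 H i) (take i H)).

Definition sample (m : nat) (P : 'I_n -> 'rV[R]_D) (s : {ffun 'I_m -> 'I_n}) : seq 'rV[R]_D :=
  [seq P (s j) | j <- enum 'I_m].

(* m independent uniform draws from P: each outcome s has probability 1/n^m. *)
Definition unif_prob (m : nat) (E : pred {ffun 'I_m -> 'I_n}) : R :=
  #|[pred s | E s]|%:R / (n ^ m)%:R.

End KCenterDefs.
Arguments unif_prob {R n m} E.

(* Two events make the output a 4-approximation: (i) every optimal cluster
   contains a sample point, and (ii) at most k' sample points are outliers.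
   Under (ii) the k optimal centers together with the sampled outliers cover
   the sample by k + k' balls of radius r_opt, so Gonzalez's algorithm covers
   the sample within 2 r_opt; under (i) every inlier is within 2 r_opt of a
   sample point of its own cluster, hence within 4 r_opt of the output.
   A cluster of size at least (e1/k) n is missed with probability at most
   (1 - e1/k)^m <= eta/k, so (i) fails with probability at most eta by the
   union bound; the expected number of sampled outliers is (e2/k) m <= eta k',
   so (ii) fails with probability at most eta by Markov's inequality.  The two
   events are not independent, but both survive replacing sampled outliers by
   inliers, and (ii) only depends on the inlier/outlier pattern of the sample;
   a Harris-type inequality, proved one coordinate at a time with Chebyshev's
   sum inequality, then gives Pr[(i) and (ii)] >= Pr[(i)] Pr[(ii)]. *)

From mathcomp Require Import all_boot all_order all_algebra.
From mathcomp Require Import reals exp sequences.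
From mathcomp Require Import ring lra.
Set Implicit Arguments. Unset Strict Implicit. Unset Printing Implicit Defensive.
Import Order.TTheory GRing.Theory Num.Theory.
Local Open Scope ring_scope.

Section SumInequalities.
Variables (R : realDomainType) (I : finType).

Lemma chebyshev_sum (f g : I -> R) :
  (forall i j, 0 <= (f i - f j) * (g i - g j)) ->
  (\sum_i f i) * (\sum_i g i) <= #|I|%:R * \sum_i f i * g i.
Proof.
move=> fg_similar.
have : 0 <= \sum_i \sum_j (f i - f j) * (g i - g j).
  by apply: sumr_ge0 => i _; apply: sumr_ge0 => j _; apply: fg_similar.
have -> : \sum_i \sum_j (f i - f j) * (g i - g j) =
    (\sum_i \sum_(j : I) f i * g i) + (\sum_(i : I) \sum_j f j * g j)
    - (\sum_i \sum_j f i * g j) - (\sum_i \sum_j g i * f j).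
  rewrite -!big_split -!sumrB /=; apply: eq_bigr => i _.
  rewrite -!big_split -!sumrB /=; apply: eq_bigr => j _; ring.
have e1 : \sum_i \sum_(j : I) f i * g i = #|I|%:R * \sum_i f i * g i.
  by under eq_bigr do rewrite sumr_const; rewrite sumrMnl mulr_natl.
have e2 : \sum_(i : I) \sum_j f j * g j = #|I|%:R * \sum_i f i * g i.
  by rewrite sumr_const mulr_natl.
rewrite e1 e2 -!big_distrlr /= [(\sum_i g i) * _]mulrC; lra.
Qed.

Lemma cauchy_schwarz (x y : I -> R) :
  (\sum_i x i * y i) ^+ 2 <= (\sum_i x i ^+ 2) * (\sum_i y i ^+ 2).
Proof.
have : 0 <= \sum_i \sum_j (x i * y j - x j * y i) ^+ 2.
  by do 2![apply: sumr_ge0 => ? _]; apply: sqr_ge0.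
have -> : \sum_i \sum_j (x i * y j - x j * y i) ^+ 2 =
    (\sum_i \sum_j x i ^+ 2 * y j ^+ 2) + (\sum_i \sum_j y i ^+ 2 * x j ^+ 2)
    - (\sum_i \sum_j (x i * y i) * (x j * y j)) *+ 2.
  rewrite -sumrMnl -!big_split -!sumrB /=; apply: eq_bigr => i _.
  rewrite -sumrMnl -!big_split -!sumrB /=; apply: eq_bigr => j _; ring.
rewrite -!big_distrlr /= [(\sum_i y i ^+ 2) * _]mulrC -expr2; lra.
Qed.

End SumInequalities.

Lemma minkowski_sum (R : rcfType) (I : finType) (x y : I -> R) :
  Num.sqrt (\sum_i (x i + y i) ^+ 2) <=
  Num.sqrt (\sum_i x i ^+ 2) + Num.sqrt (\sum_i y i ^+ 2).
Proof.
set X := \sum_i x i ^+ 2; set Y := \sum_i y i ^+ 2.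
have X_ge0 : 0 <= X by apply: sumr_ge0 => i _; apply: sqr_ge0.
have Y_ge0 : 0 <= Y by apply: sumr_ge0 => i _; apply: sqr_ge0.
have cs : \sum_i x i * y i <= Num.sqrt X * Num.sqrt Y.
  rewrite -sqrtrM // (le_trans (ler_norm _)) // -sqrtr_sqr ler_sqrt ?mulr_ge0 //.
  exact: cauchy_schwarz.
rewrite -[leRHS]ger0_norm ?addr_ge0 ?sqrtr_ge0 // -sqrtr_sqr ler_sqrt ?sqr_ge0 //.
have -> : \sum_i (x i + y i) ^+ 2 = X + Y + (\sum_i x i * y i) *+ 2.
  rewrite /X /Y -big_split -sumrMnl -big_split /=; apply: eq_bigr => i _; ring.
rewrite sqrrD !sqr_sqrtr //; lra.
Qed.

Section FfunCons.
Variable T : finType.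

Definition fcons m (v : T) (s : {ffun 'I_m -> T}) : {ffun 'I_m.+1 -> T} :=
  [ffun i => if unlift ord0 i is Some j then s j else v].

Lemma fcons0 m v s : @fcons m v s ord0 = v.
Proof. by rewrite ffunE unlift_none. Qed.

Lemma fcons_lift m v s j : @fcons m v s (lift ord0 j) = s j.
Proof. by rewrite ffunE liftK. Qed.

Lemma codom_fcons m v s : codom (@fcons m v s) = v :: codom s.
Proof.
rewrite !codomE enum_ordSl /= fcons0 -map_comp; congr cons.
by apply: eq_map => j; rewrite /= fcons_lift.
Qed.

Lemma fcons_rel (r : rel T) m v w (s t : {ffun 'I_m -> T}) :
  r v w -> (forall j, r (s j) (t j)) -> forall i, r (fcons v s i) (fcons w t i).
Proof.
by move=> rvw rst i; case: (unliftP ord0 i) => [j ->|->]; rewrite ?fcons_lift ?fcons0.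
Qed.

Lemma big_ffunS (R : Type) (idx : R) (op : Monoid.com_law idx) m
    (F : {ffun 'I_m.+1 -> T} -> R) :
  \big[op/idx]_s F s = \big[op/idx]_v \big[op/idx]_(s : {ffun 'I_m -> T}) F (fcons v s).
Proof.
rewrite pair_big /= (reindex (fun p : T * {ffun 'I_m -> T} => fcons p.1 p.2)) //.
exists (fun s : {ffun 'I_m.+1 -> T} => (s ord0, [ffun j => s (lift ord0 j)])).
  move=> [v s] _ /=.
  by rewrite fcons0; congr pair; apply/ffunP => j; rewrite ffunE fcons_lift.
move=> s _ /=; apply/ffunP => i; rewrite ffunE.
by case: unliftP => [j ->|->]; rewrite ?ffunE.
Qed.

End FfunCons.

Lemma sum_indicator (R : pzSemiRingType) (T : finType) (A : {pred T}) :
  \sum_i (i \in A)%:R = #|A|%:R :> R.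
Proof.
rewrite -sum1_card natr_sum [RHS]big_mkcond /=.
by apply: eq_bigr => i _; case: (i \in A).
Qed.

Lemma onem_expn_le_expR (R : realType) (y : R) m :
  y <= 1 -> (1 - y) ^+ m <= expR (- y * m%:R).
Proof.
move=> y_le1; rewrite expRM_natr; apply: lerXn2r; rewrite ?nnegrE ?subr_ge0 ?expR_ge0 //.
exact: expR_ge1Dx.
Qed.

Section UniformSampling.
Variables (R : realType) (n : nat).
Hypothesis n_gt0 : (0 < n)%N.
Implicit Types (m : nat) (v : 'I_n).
Local Notation Pr := (@unif_prob R n _).

Definition unif_mean m (X : {ffun 'I_m -> 'I_n} -> R) : R :=
  (\sum_s X s) / (n ^ m)%:R.

Lemma unif_probE m (E : pred {ffun 'I_m -> 'I_n}) :
  Pr E = unif_mean (fun s => (E s)%:R).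
Proof. by rewrite /unif_prob /unif_mean -sum_indicator. Qed.

Lemma unif_mean0 (X : {ffun 'I_0 -> 'I_n} -> R) s : unif_mean X = X s.
Proof.
rewrite /unif_mean expn0 divr1 (big_pred1 s) // => t.
by apply/esym/eqP/ffunP => -[].
Qed.

Lemma unif_meanS m (X : {ffun 'I_m.+1 -> 'I_n} -> R) :
  unif_mean X = n%:R^-1 * \sum_v unif_mean (fun s => X (fcons v s)).
Proof. by rewrite /unif_mean big_ffunS -mulr_suml expnS natrM invfM mulrCA. Qed.

Lemma le_unif_mean m (X Y : {ffun 'I_m -> 'I_n} -> R) :
  (forall s, X s <= Y s) -> unif_mean X <= unif_mean Y.
Proof. by move=> XY; rewrite ler_wpM2r ?invr_ge0 ?ler0n // ler_sum. Qed.

Lemma eq_unif_mean m (X Y : {ffun 'I_m -> 'I_n} -> R) :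
  (forall s, X s = Y s) -> unif_mean X = unif_mean Y.
Proof. by move=> XY; congr (_ / _); apply: eq_bigr => s _. Qed.

Lemma unif_mean_cst m c : unif_mean (fun _ : {ffun 'I_m -> 'I_n} => c) = c.
Proof.
rewrite /unif_mean sumr_const card_ffun !card_ord -[c *+ _]mulr_natr mulfK //.
by rewrite pnatr_eq0 -lt0n expn_gt0 n_gt0.
Qed.

Lemma unif_meanD m (X Y : {ffun 'I_m -> 'I_n} -> R) :
  unif_mean (fun s => X s + Y s) = unif_mean X + unif_mean Y.
Proof. by rewrite /unif_mean big_split mulrDl. Qed.

Lemma unif_meanZ m c (X : {ffun 'I_m -> 'I_n} -> R) :
  unif_mean (fun s => c * X s) = c * unif_mean X.
Proof. by rewrite /unif_mean -mulr_sumr mulrA. Qed.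

Lemma unif_mean_sum m (J : finType) (X : J -> {ffun 'I_m -> 'I_n} -> R) :
  unif_mean (fun s => \sum_j X j s) = \sum_j unif_mean (X j).
Proof. by rewrite /unif_mean exchange_big mulr_suml. Qed.

Lemma unif_prob0 (E : pred {ffun 'I_0 -> 'I_n}) s : Pr E = (E s)%:R.
Proof. by rewrite unif_probE (unif_mean0 _ s). Qed.

Lemma unif_probS m (E : pred {ffun 'I_m.+1 -> 'I_n}) :
  Pr E = n%:R^-1 * \sum_v Pr (fun s => E (fcons v s)).
Proof.
rewrite unif_probE unif_meanS; congr (_ * _).
by apply: eq_bigr => v _; rewrite unif_probE.
Qed.

Lemma le_unif_prob m (E F : pred {ffun 'I_m -> 'I_n}) :
  (forall s, E s -> F s) -> Pr E <= Pr F.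
Proof.
move=> EF; rewrite !unif_probE; apply: le_unif_mean => s.
by case: (boolP (E s)) => [/EF ->|_] //=; rewrite ler0n.
Qed.

Lemma eq_unif_prob m (E F : pred {ffun 'I_m -> 'I_n}) :
  (forall s, E s = F s) -> Pr E = Pr F.
Proof. by move=> EF; rewrite !unif_probE; apply: eq_unif_mean => s; rewrite EF. Qed.

Lemma unif_probC m (E : pred {ffun 'I_m -> 'I_n}) :
  Pr (fun s => ~~ E s) = 1 - Pr E.
Proof.
apply/eqP; rewrite eq_sym subr_eq /Pr -mulrDl -natrD addnC.
rewrite (cardC [pred s | E s]) card_ffun !card_ord divff //.
by rewrite pnatr_eq0 -lt0n expn_gt0 n_gt0.
Qed.

Lemma unif_prob_andl m b (E : pred {ffun 'I_m -> 'I_n}) :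
  Pr (fun s => b && E s) = b%:R * Pr E.
Proof.
case: b; first by rewrite mul1r.
by rewrite mul0r unif_probE /= unif_mean_cst.
Qed.

Lemma unif_prob_exists m (J : finType) (E : J -> pred {ffun 'I_m -> 'I_n}) :
  Pr (fun s => [exists j, E j s]) <= \sum_j Pr (E j).
Proof.
rewrite unif_probE; under eq_bigr do rewrite unif_probE.
rewrite -unif_mean_sum; apply: le_unif_mean => s.
case: existsP => [[j Ej]|_]; last by apply: sumr_ge0 => j _; rewrite ler0n.
by rewrite (bigD1 j) //= Ej lerDl sumr_ge0 // => i _; rewrite ler0n.
Qed.

Lemma unif_mean_count m (B : {set 'I_n}) :
  unif_mean (fun s : {ffun 'I_m -> 'I_n} => (count (mem B) (codom s))%:R) =
  m%:R * (#|B|%:R / n%:R).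
Proof.
elim: m => [|m IH].
  by rewrite (unif_mean0 _ [ffun=> Ordinal n_gt0]) codomE enum_ord0 mul0r.
rewrite unif_meanS.
under eq_bigr => v _.
  rewrite (eq_unif_mean (Y := fun s => (v \in B)%:R + (count (mem B) (codom s))%:R)).
    by rewrite unif_meanD unif_mean_cst IH; over.
  by move=> s; rewrite codom_fcons /= natrD.
rewrite big_split /= sumr_const card_ord -[_ *+ n]mulr_natr sum_indicator.
by rewrite -addn1 natrD; field; rewrite pnatr_eq0 -lt0n.
Qed.

Lemma unif_prob_count_gt m (B : {set 'I_n}) K :
  K.+1%:R * Pr (fun s : {ffun 'I_m -> 'I_n} => K < count (mem B) (codom s))%N
  <= m%:R * (#|B|%:R / n%:R).
Proof.
rewrite -unif_mean_count unif_probE -unif_meanZ; apply: le_unif_mean => s.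
by case: ltnP => [lt|_]; rewrite ?mulr1 ?mulr0 ?ler_nat.
Qed.

Lemma unif_prob_avoid m (A : {set 'I_n}) :
  Pr (fun s : {ffun 'I_m -> 'I_n} => ~~ has (mem A) (codom s)) =
  (1 - #|A|%:R / n%:R) ^+ m.
Proof.
elim: m => [|m IH].
  by rewrite (unif_prob0 _ [ffun=> Ordinal n_gt0]) codomE enum_ord0.
rewrite unif_probS exprS -IH.
under eq_bigr => v _.
  rewrite (eq_unif_prob (F := fun s => (v \notin A) && ~~ has (mem A) (codom s))).
    by rewrite unif_prob_andl; over.
  by move=> s; rewrite codom_fcons /= negb_or.
rewrite -mulr_suml mulrA; congr (_ * _).
under eq_bigr do rewrite -in_setC.
have := cardsC A; rewrite card_ord sum_indicator => /(congr1 (fun k => k%:R : R)).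
rewrite natrD => <-; field.
by rewrite -natrD cardsC card_ord pnatr_eq0 -lt0n.
Qed.

Lemma unif_prob_avoid_le m (A : {set 'I_n}) (c delta : R) :
  0 < delta -> c * n%:R <= #|A|%:R -> ln delta^-1 <= c * m%:R ->
  Pr (fun s : {ffun 'I_m -> 'I_n} => ~~ has (mem A) (codom s)) <= delta.
Proof.
move=> delta_gt0 A_large m_large; have n_pos : 0 < n%:R :> R by rewrite ltr0n.
rewrite unif_prob_avoid; set y := #|A|%:R / n%:R.
have y_le1 : y <= 1.
  by rewrite ler_pdivrMr // mul1r ler_nat -[X in (_ <= X)%N]card_ord max_card.
have c_le_y : c <= y by rewrite ler_pdivlMr.
apply: le_trans (onem_expn_le_expR m y_le1) _.
rewrite -[X in _ <= X]invrK -[X in _ <= X^-1]lnK ?posrE ?invr_gt0 // -expRN.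
by rewrite ler_expR mulNr lerN2 (le_trans m_large) // ler_wpM2r.
Qed.

Definition coordwise_monotone m (r : rel 'I_n) (f : pred {ffun 'I_m -> 'I_n}) :=
  forall s t : {ffun 'I_m -> 'I_n}, (forall j, r (s j) (t j)) -> f s -> f t.

Lemma unif_prob_harris (rho : pred 'I_n) m (f g : pred {ffun 'I_m -> 'I_n}) :
  coordwise_monotone [rel x y | (x == y) || ~~ rho x && rho y] f ->
  coordwise_monotone [rel x y | rho x ==> rho y] g ->
  Pr f * Pr g <= Pr (fun s => f s && g s).
Proof.
elim: m f g => [|m IH] f g f_up g_up.
  rewrite !(unif_prob0 _ [ffun=> Ordinal n_gt0]).
  by case: (f _); case: (g _); rewrite ?mul1r ?mul0r.
rewrite !unif_probS.
set a := fun v => Pr (fun s => f (fcons v s)).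
set b := fun v => Pr (fun s => g (fcons v s)).
have up v w : ~~ rho v -> rho w -> a v <= a w /\ b v <= b w.
  move=> rv rw; split; apply: le_unif_prob => s.
    by apply: f_up; apply: fcons_rel => [|j] /=; rewrite ?eqxx ?rv ?rw ?orbT.
  by apply: g_up; apply: fcons_rel => [|j] /=; rewrite ?implybb ?(negbTE rv).
have same v w : rho v = rho w -> b v = b w.
  move=> rvw; apply/le_anti/andP; split; apply: le_unif_prob => s; apply: g_up;
    by apply: fcons_rel => [|j] /=; rewrite ?rvw implybb.
have cheb : (\sum_v a v) * (\sum_v b v) <= n%:R * \sum_v a v * b v.
  rewrite -[X in X%:R * _]card_ord; apply: chebyshev_sum => v w.
  case: (boolP (rho v)) => rv; case: (boolP (rho w)) => rw.
  - by rewrite (same v w) ?rv ?rw // subrr mulr0.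
  - by have [? ?] := up w v rw rv; rewrite mulr_ge0 // subr_ge0.
  - by have [? ?] := up v w rv rw; rewrite mulr_le0 // subr_le0.
  - by rewrite (same v w) ?(negbTE rv) ?(negbTE rw) // subrr mulr0.
have IHv v : a v * b v <= Pr (fun s => f (fcons v s) && g (fcons v s)).
  by apply: IH => s t st; [apply: f_up | apply: g_up];
    apply: fcons_rel => //=; rewrite ?eqxx ?implybb.
have n_pos : 0 < n%:R :> R by rewrite ltr0n.
apply: (@le_trans _ _ (n%:R^-1 * \sum_v a v * b v)); last first.
  by rewrite ler_wpM2l ?invr_ge0 ?ler0n // ler_sum.
by rewrite mulrACA -mulrA ler_pM2l ?invr_gt0 // ler_pdivrMl.
Qed.

End UniformSampling.

Section EuclideanDistance.
Variables (R : realType) (D : nat).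
Implicit Types (p q x : 'rV[R]_D) (H Q S : seq 'rV[R]_D).

Lemma edist_ge0 p q : 0 <= edist p q.
Proof. exact: sqrtr_ge0. Qed.

Lemma edistC p q : edist p q = edist q p.
Proof. by rewrite /edist /enorm; congr Num.sqrt; apply: eq_bigr => i _; rewrite !mxE; ring. Qed.

Lemma edistxx p : edist p p = 0.
Proof. by rewrite /edist /enorm big1 ?sqrtr0 // => i _; rewrite !mxE subrr expr0n. Qed.

Lemma edist_triangle p q x : edist p x <= edist p q + edist q x.
Proof.
rewrite /edist /enorm (eq_bigr (fun i => ((p - q) ord0 i + (q - x) ord0 i) ^+ 2)).
  exact: minkowski_sum.
by move=> i _; rewrite !mxE; congr (_ ^+ 2); ring.
Qed.

Lemma dist_set_le p H h : h \in H -> dist_set p H <= edist p h.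
Proof. by move=> hH; apply: ge_bigmin_seq. Qed.

Lemma le_dist_set p H (c : R) : H != [::] -> (forall h, h \in H -> c <= edist p h) ->
  c <= dist_set p H.
Proof.
case: H => // h H _ cH; rewrite /dist_set big_seq.
by apply: le_bigmin => [|i]; [apply: cH; rewrite mem_head | apply: cH].
Qed.

(* For H = [::] the definition makes dist_set p H = edist p p = 0. *)
Lemma dist_set_triangle p q H : dist_set p H <= edist p q + dist_set q H.
Proof.
case: H => [|h H]; first by rewrite /dist_set !big_nil /= !edistxx addr0 edist_ge0.
suff : dist_set p (h :: H) - edist p q <= dist_set q (h :: H) by rewrite lerBlDl.
apply: le_dist_set => // h' h'H; rewrite lerBlDl.
exact: le_trans (dist_set_le p h'H) (edist_triangle p q h').
Qed.

Lemma separated_size_le (L Q : seq 'rV[R]_D) r :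
  (forall a b, (a < b < size L)%N -> 2 * r < edist (nth 0 L a) (nth 0 L b)) ->
  (forall x, x \in L -> exists2 q, q \in Q & edist x q <= r) ->
  (size L <= size Q)%N.
Proof.
move=> sep cover.
pose f a := nth 0 Q (find (fun q => edist (nth 0 L a) q <= r) Q).
have fP a : (a < size L)%N -> f a \in Q /\ edist (nth 0 L a) (f a) <= r.
  move=> aL; have [q qQ xq] := cover _ (mem_nth 0 aL).
  have hasQ : has (fun q => edist (nth 0 L a) q <= r) Q by apply/hasP; exists q.
  by split; [rewrite /f mem_nth // -has_find | exact: (nth_find 0 hasQ)].
have clash a b : (a < b < size L)%N -> f a != f b.
  move=> abL; have /andP[ab bL] := abL; have aL := ltn_trans ab bL.
  apply/eqP => fab; have := sep a b abL.
  have [_ ha] := fP a aL; have [_ hb] := fP b bL; rewrite fab in ha.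
  have := edist_triangle (nth 0 L a) (f b) (nth 0 L b).
  rewrite (edistC (f b)); lra.
have f_inj : {in iota 0 (size L) &, injective f}.
  move=> a b; rewrite !mem_iota /= => aL bL fab.
  have [ab|ba|//] := ltngtP a b.
    by have := clash a b; rewrite ab bL fab eqxx => /(_ isT).
  by have := clash b a; rewrite ba aL fab eqxx => /(_ isT).
have sub : {subset map f (iota 0 (size L)) <= Q}.
  by move=> _ /mapP[a + ->]; rewrite mem_iota => /andP[_ aL]; exact: (fP a aL).1.
have f_uniq : uniq (map f (iota 0 (size L))) by rewrite (map_inj_in_uniq f_inj) iota_uniq.
by have := uniq_leq_size f_uniq sub; rewrite size_map size_iota.
Qed.

Lemma gonzalez_run_sub S M H : gonzalez_run S M H -> {subset H <= S}.
Proof. by move=> [sH [inS _]] h /(nthP 0)[i iH <-]; apply: inS; rewrite -sH. Qed.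

Lemma gonzalez_spread S M H x : gonzalez_run S M H -> x \in S ->
  forall a b, (a < b < M.+1)%N ->
  dist_set x H <= edist (nth 0 (x :: H) a) (nth 0 (x :: H) b).
Proof.
move=> [sH [_ far]] xS [|a] [|b] //=.
  by rewrite ltnS => bM; apply: dist_set_le; rewrite mem_nth ?sH.
rewrite !ltnS => /andP[ab bM].
have b_gt0 : (0 < b)%N := leq_ltn_trans (leq0n a) ab.
have aH : nth 0 H a \in take b H by rewrite -(nth_take 0 ab) mem_nth // size_take sH bM.
apply: le_trans (_ : dist_set x (take b H) <= _).
  apply: le_dist_set => [|h /mem_take]; last exact: dist_set_le.
  by rewrite -size_eq0 size_take sH bM -lt0n.
rewrite edistC; apply: le_trans (dist_set_le _ aH).
by apply: far => //; rewrite b_gt0.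
Qed.

Lemma gonzalez_cover S M H Q r : gonzalez_run S M H -> (size Q <= M)%N ->
  (forall x, x \in S -> exists2 q, q \in Q & edist x q <= r) ->
  forall x, x \in S -> dist_set x H <= 2 * r.
Proof.
move=> run QM cover x xS; rewrite leNgt; apply/negP => far.
have sizeL : size (x :: H) = M.+1 by case: run => sH _; rewrite /= sH.
suff : (size (x :: H) <= size Q)%N by rewrite sizeL => /leq_trans/(_ QM); rewrite ltnn.
apply: (separated_size_le (r := r)) => [a b|y].
  by rewrite sizeL => abM; exact: lt_le_trans far (gonzalez_spread run xS abM).
rewrite inE => /predU1P[->|/(gonzalez_run_sub run) yS]; [exact: cover xS|exact: cover yS].
Qed.

Variables (n : nat) (P : 'I_n -> 'rV[R]_D).
Implicit Types A : {set 'I_n}.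

Lemma cost_out_le_max_dist z H A : #|A| = (n - z)%N -> cost_out P z H <= max_dist P H A.
Proof. by move=> cardA; apply: ge_bigmin_seq; rewrite ?mem_index_enum ?cardA. Qed.

Lemma max_dist_le H A (c : R) : 0 <= c -> (forall i, i \in A -> dist_set (P i) H <= c) ->
  max_dist P H A <= c.
Proof. exact: bigmax_le. Qed.

Lemma dist_set_le_max_dist H A i : i \in A -> dist_set (P i) H <= max_dist P H A.
Proof. exact: (@le_bigmax_cond _ _ _ _ i (fun j => j \in A) (fun j => dist_set (P j) H)). Qed.

End EuclideanDistance.

Section KCenterSample.
Variables (R : realType) (D n k : nat) (P : 'I_n -> 'rV[R]_D).
Variables (Popt : {set 'I_n}) (sigma : 'I_n -> 'I_k).
Local Notation Pr := (@unif_prob R n _).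

Definition cluster j := [set i in Popt | sigma i == j].

Definition hits_all_clusters m (s : {ffun 'I_m -> 'I_n}) :=
  [forall j, has (mem (cluster j)) (codom s)].

Definition few_outliers K m (s : {ffun 'I_m -> 'I_n}) :=
  (count (mem (~: Popt)) (codom s) <= K)%N.

Lemma sampleE m (s : {ffun 'I_m -> 'I_n}) : sample P s = map P (codom s).
Proof. by rewrite /sample codomE -map_comp. Qed.

Lemma gonzalez_sample_cost (C : 'I_k -> 'rV[R]_D) z K m (s : {ffun 'I_m -> 'I_n}) H :
  #|Popt| = (n - z)%N ->
  (forall i, i \in Popt -> edist (P i) (C (sigma i)) = dist_set (P i) (codom C)) ->
  hits_all_clusters s -> few_outliers K s ->
  gonzalez_run (sample P s) (k + K) H ->
  cost_out P z H <= 4 * max_dist P (codom C) Popt.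
Proof.
move=> cardP sigmaP hits few run; set r := max_dist P (codom C) Popt.
have r_ge0 : 0 <= r by apply: bigmax_ge_id.
have near_center i : i \in Popt -> edist (P i) (C (sigma i)) <= r.
  by move=> iP; rewrite sigmaP ?dist_set_le_max_dist.
(* An r-cover of the sample by at most k + K points. *)
pose Q := codom C ++ [seq P v | v <- codom s & v \in ~: Popt].
have sizeQ : (size Q <= k + K)%N.
  by rewrite size_cat size_codom card_ord size_map size_filter leq_add2l.
have sample_near x : x \in sample P s -> exists2 q, q \in Q & edist x q <= r.
  rewrite sampleE => /mapP[v vs ->]; case: (boolP (v \in Popt)) => vP.
    by exists (C (sigma v)); [rewrite mem_cat codom_f | exact: near_center].
  exists (P v); last by rewrite edistxx.
  by rewrite mem_cat map_f ?orbT // mem_filter inE vP.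
have sample_close := gonzalez_cover run sizeQ sample_near.
apply: le_trans (cost_out_le_max_dist P H cardP) _.
apply: max_dist_le => [|i iP]; first by rewrite mulr_ge0.
have /hasP[v vs /[!inE] /andP[vP /eqP sigma_v]] := forallP hits (sigma i).
have hi := near_center i iP; have hv := near_center v vP; rewrite sigma_v in hv.
have := edist_triangle (P i) (C (sigma i)) (P v); rewrite (edistC (C _)).
have := dist_set_triangle (P i) (P v) H.
have : dist_set (P v) H <= 2 * r by apply: sample_close; rewrite sampleE map_f.
lra.
Qed.

Lemma hits_all_clusters_up m :
  coordwise_monotone [rel x y | (x == y) || (x \notin Popt) && (y \in Popt)]
    (@hits_all_clusters m).
Proof.
move=> s t st /forallP hits; apply/forallP => c.
have /hasP[_ /codomP[j ->] /[!inE] /andP[sP sc]] := hits c.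
apply/hasP; exists (t j); first exact: codom_f.
by have := st j; rewrite /= sP /= orbF => /eqP <-; rewrite inE sP.
Qed.

Lemma few_outliers_up K m :
  coordwise_monotone [rel x y | (x \in Popt) ==> (y \in Popt)] (@few_outliers K m).
Proof.
move=> s t st; rewrite /few_outliers !codomE !count_map; apply: leq_trans.
by apply: sub_count => j /=; rewrite !inE; apply: contra (implyP (st j)).
Qed.

Hypothesis n_gt0 : (0 < n)%N.
Hypothesis k_gt0 : (0 < k)%N.

Lemma prob_hits_all_clusters (e1 eta : R) m :
  0 < e1 -> 0 < eta ->
  (forall j, e1 / k%:R * n%:R <= #|cluster j|%:R) ->
  k%:R / e1 * ln (k%:R / eta) <= m%:R ->
  1 - eta <= Pr (@hits_all_clusters m).
Proof.
move=> e1_gt0 eta_gt0 big_clusters m_large.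
have k_pos : 0 < k%:R :> R by rewrite ltr0n.
have miss j : Pr (fun s : {ffun 'I_m -> 'I_n} => ~~ has (mem (cluster j)) (codom s))
    <= eta / k%:R.
  apply: unif_prob_avoid_le; rewrite ?divr_gt0 ?big_clusters // invf_div.
  apply: le_trans (ler_wpM2l (ltW (divr_gt0 e1_gt0 k_pos)) m_large).
  by rewrite mulrA [e1 / _ * _]mulrA divfK ?divff ?gt_eqF // mul1r.
have : Pr (fun s : {ffun 'I_m -> 'I_n} => ~~ hits_all_clusters s) <= eta.
  apply: (@le_trans _ _
    (Pr (fun s : {ffun 'I_m -> 'I_n} => [exists j, ~~ has (mem (cluster j)) (codom s)]))).
    by apply: le_unif_prob => s; rewrite negb_forall.
  apply: le_trans (unif_prob_exists _ _) _; apply: le_trans (ler_sum _ (fun j _ => miss j)) _.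
  by rewrite sumr_const card_ord -[(eta / _) *+ k]mulr_natr divfK ?gt_eqF.
rewrite unif_probC //; lra.
Qed.

Lemma prob_few_outliers (e2 eta : R) m K :
  0 < eta ->
  #|~: Popt|%:R = e2 / k%:R * n%:R ->
  1 / eta * (e2 / k%:R) * m%:R <= K%:R ->
  1 - eta <= Pr (@few_outliers K m).
Proof.
move=> eta_gt0 card_out K_large.
have n_pos : 0 < n%:R :> R by rewrite ltr0n.
have markov := @unif_prob_count_gt R n n_gt0 m (~: Popt) K.
rewrite card_out mulfK ?gt_eqF // in markov.
move: K_large; rewrite div1r -mulrA ler_pdivrMl // => K_large.
have : Pr (fun s : {ffun 'I_m -> 'I_n} => K < count (mem (~: Popt)) (codom s))%N <= eta.
  rewrite -(ler_pM2l (ltr0Sn _ K)); apply: (le_trans markov).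
  by rewrite mulrC (le_trans K_large) // mulrC ler_wpM2r ?(ltW eta_gt0) ?ler_nat.
have -> : Pr (@few_outliers K m) =
    Pr (fun s : {ffun 'I_m -> 'I_n} => ~~ (K < count (mem (~: Popt)) (codom s))%N).
  by apply: eq_unif_prob => s; rewrite /few_outliers leqNgt.
rewrite unif_probC //; lra.
Qed.

End KCenterSample.

Theorem theorem1 (R : realType) (D n k z m k' : nat) (P : 'I_n -> 'rV[R]_D)
    (e1 e2 eta : R) (C : 'I_k -> 'rV[R]_D)
    (alg : {ffun 'I_m -> 'I_n} -> seq 'rV[R]_D) :
  injective P -> (0 < k)%N -> (0 < z < n)%N ->
  0 < e1 -> 0 < e2 -> 0 < eta < 1 ->
  significant P z e1 e2 C ->
  k%:R / e1 * ln (k%:R / eta) <= m%:R ->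
  1 / eta * (e2 / k%:R) * m%:R <= k'%:R ->
  (forall s, gonzalez_run (sample P s) (k + k') (alg s)) ->
  (forall s, size (alg s) = (k + k')%N) /\
  (m%:R = k%:R / e1 * ln (k%:R / eta) -> k'%:R = 1 / eta * (e2 / k%:R) * m%:R ->
     forall s, (size (alg s))%:R = k%:R + 1 / eta * (e2 / e1) * ln (k%:R / eta)) /\
  (1 - eta) ^+ 2 <=
    unif_prob (fun s : {ffun 'I_m -> 'I_n} =>
                 cost_out P z (alg s) <= 4 * cost_out P z (codom C)).
Proof.
move=> _ k_gt0 /andP[_ z_lt_n] e1_gt0 _ /andP[eta_gt0 eta_lt1]
  [_ [z_def [Popt [cardP [Popt_opt [sigma [sigmaP clusters]]]]]]] m_large k'_large run.
have n_gt0 : (0 < n)%N := leq_ltn_trans (leq0n z) z_lt_n.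
have size_alg s : size (alg s) = (k + k')%N by case: (run s).
split=> //; split=> [m_def k'_def s|].
  by rewrite size_alg natrD k'_def m_def; field; rewrite !gt_eqF ?ltr0n.
have card_out : #|~: Popt|%:R = e2 / k%:R * n%:R :> R.
  rewrite -z_def; congr _%:R.
  have := cardsC Popt; rewrite cardP card_ord => card_split.
  by apply/eqP; rewrite -(eqn_add2l (n - z)) card_split subnK // ltnW.
have hits := prob_hits_all_clusters n_gt0 k_gt0 e1_gt0 eta_gt0 clusters m_large.
have few := prob_few_outliers n_gt0 eta_gt0 card_out k'_large.
have corr := unif_prob_harris R n_gt0
  (@hits_all_clusters_up n k Popt sigma m) (@few_outliers_up n Popt k' m).
apply: le_trans (le_trans _ corr) _.
  by rewrite expr2 ler_pM // subr_ge0 ltW.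
apply: le_unif_prob => s /andP[hits_s few_s]; rewrite -Popt_opt.
exact: gonzalez_sample_cost cardP sigmaP hits_s few_s (run s).
Qed.
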